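(* For every $n\ge 3$, the sun $S_n$ is distance antimagic.
   Context: The sun $S_n$ ($n\ge3$) is the graph on $2n$ vertices obtained from a cycle $x_1x_2\cdots x_n x_1$ by attaching a new pendant vertex $y_i$ adjacent only to $x_i$, for each $i=1,\dots,n$. For a graph $G=(V,E)$ with $v=|V|$ and a bijection $f:V\to\{1,\dots,v\}$, the vertex-weight of $x$ is $w(x)=\sum_{y\in N(x)}f(y)$ with $N(x)$ the set of neighbours of $x$. $G$ is distance antimagic if it admits a bijection $f$ under which all vertex-weights are pairwise distinct. *)

From mathcomp Require Import all_boot.
Set Implicit Arguments. Unset Strict Implicit. Unset Printing Implicit Defensive.

Definition vweight (V : finType) (adj : rel V) (f : V -> nat) (x : V) : nat :=
  \sum_(y : V | adj x y) f y.

(* A bijection onto {1..|V|} is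
   encoded as a bijection g : V -> 'I_#|V| with f x = g x + 1. *)
Definition distance_antimagic (V : finType) (adj : rel V) : Prop :=
  exists g : V -> 'I_#|V|, bijective g /\
    injective (vweight adj (fun v => (nat_of_ord (g v)).+1)).

(* The sun S_n: vertices inl i = x_i (cycle vertices) and inr i = y_i (pendants),
   i ranging over 'I_n (x_0 ... x_{n-1}, indices mod n). *)
Definition sun_adj (n : nat) : rel ('I_n + 'I_n) :=
  fun u v =>
    match u, v with
    | inl i, inl j => ((i.+1 %% n) == j) || ((j.+1 %% n) == i)
    | inl i, inr j => i == j
    | inr i, inl j => i == j
    | inr _, inr _ => false
    end.
Arguments sun_adj n : clear implicits.

From mathcomp Require Import all_boot.
From mathcomp Require Import zify.

(* Label the cycle vertex x_i with i+1 and the pendant y_i with 2n-i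
   (indices 0 <= i < n).  The only neighbour of y_i is x_i, so the pendant
   weights are 1, ..., n.  The neighbours of x_i are x_(i+1), x_(i-1) and
   y_i, which are three distinct vertices because n >= 3, so x_i weighs
     3n+2 (i = 0),   2n+1 (i = n-1),   2n+2+i (0 < i < n-1);
   these n values are pairwise distinct and all exceed n. *)

Section CyclicIndices.
Variable n : nat.

Lemma ordS_val (i : 'I_n) : nat_of_ord (ordS i) = if i.+1 == n then 0 else i.+1.
Proof.
rewrite /=; case: eqP => [->|ne]; first by rewrite modnn.
by rewrite modn_small //; have := ltn_ord i; lia.
Qed.

Lemma ord_pred_val (i : 'I_n) :
  nat_of_ord (ord_pred i) = if i == 0 :> nat then n.-1 else i.-1.
Proof.
have := ltn_ord i; rewrite /=; case: eqP => [->|ne] lt_in.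
  by rewrite add0n modn_small //; lia.
have -> : (i + n).-1 = i.-1 + n by lia.
by rewrite modnDr modn_small //; lia.
Qed.

Lemma ordS_neq_ord_pred (n_gt2 : 2 < n) (i : 'I_n) : ordS i != ord_pred i.
Proof.
apply/eqP => /(congr1 (@nat_of_ord n)); rewrite ordS_val ord_pred_val.
by have := ltn_ord i; repeat case: eqP; lia.
Qed.

End CyclicIndices.

Section SunWeights.
Variable n : nat.
Local Notation V := ('I_n + 'I_n)%type.

Lemma sun_weight_cycle (n_gt2 : 2 < n) (f : V -> nat) (i : 'I_n) :
  vweight (sun_adj n) f (inl i) = f (inl (ordS i)) + f (inl (ord_pred i)) + f (inr i).
Proof.
rewrite /vweight big_sumType /= [X in _ + X](big_pred1 i); last first.
  by move=> j /=; rewrite eq_sym.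
congr (_ + _).
have adj_S : (i.+1 %% n == ordS i) || ((ordS i).+1 %% n == i) by rewrite eqxx.
have adj_P : (i.+1 %% n == ord_pred i) || ((ord_pred i).+1 %% n == i).
  by apply/orP; right; have /(congr1 val) /= -> := ord_predK i.
rewrite (bigD1 (ordS i) adj_S) /= (bigD1 (ord_pred i)) /=; last first.
  by rewrite adj_P eq_sym ordS_neq_ord_pred.
rewrite big1 ?addn0 // => j /andP [/andP [/orP [jS|Sj] neS] neP].
  have j_succ : j = ordS i by apply: val_inj; apply/esym/eqP.
  by rewrite j_succ eqxx in neS.
have j_pred : j = ord_pred i.
  by rewrite -[j]ordSK (_ : ordS j = i) //; apply: val_inj; apply/eqP.
by rewrite j_pred eqxx in neP.
Qed.

Lemma sun_weight_pendant (f : V -> nat) (i : 'I_n) :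
  vweight (sun_adj n) f (inr i) = f (inl i).
Proof. by rewrite /vweight big_sumType /= (big_pred1 i) // big_pred0 ?addn0. Qed.

(* The labelling: x_i gets i+1 and y_i gets 2n-i (stored shifted down by 1). *)
Definition sun_label (v : V) : nat :=
  match v with inl i => val i | inr i => (n + n).-1 - val i end.

Lemma sun_label_lt (v : V) : sun_label v < #|{: V}|.
Proof. by rewrite card_sum card_ord; case: v => i /=; have := ltn_ord i; lia. Qed.

Definition sun_labelling (v : V) : 'I_#|{: V}| := Ordinal (sun_label_lt v).

(* Cycle labels are 0..n-1 and pendant labels n..2n-1, each kind injectively. *)
Lemma sun_labelling_bij : bijective sun_labelling.
Proof.
apply: inj_card_bij; last by rewrite card_ord.
move=> [i|i] [j|j] /(congr1 val) /= eq_ij;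
  have lt_in := ltn_ord i; have lt_jn := ltn_ord j;
  try (congr (_ _); apply: ord_inj); lia.
Qed.

Local Notation label v := (val (sun_labelling v)).+1.

Definition cycle_weight (i : nat) : nat :=
  if i == 0 then 3 * n + 2 else if i.+1 == n then 2 * n + 1 else 2 * n + 2 + i.

Lemma cycle_weight_gt (i : nat) : n < cycle_weight i.
Proof. by rewrite /cycle_weight; repeat case: eqP; lia. Qed.

Lemma cycle_weight_inj (i j : nat) :
  i < n -> j < n -> cycle_weight i = cycle_weight j -> i = j.
Proof. by move=> lt_in lt_jn; rewrite /cycle_weight; repeat case: eqP; lia. Qed.

Lemma labelled_weight_cycle (n_gt2 : 2 < n) (i : 'I_n) :
  vweight (sun_adj n) (fun v => label v) (inl i) = cycle_weight i.
Proof.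
rewrite sun_weight_cycle //; have := ordS_val n i; have := ord_pred_val n i.
by rewrite /cycle_weight /=; have := ltn_ord i; repeat case: eqP; lia.
Qed.

Lemma labelled_weight_pendant (i : 'I_n) :
  vweight (sun_adj n) (fun v => label v) (inr i) = i.+1.
Proof. by rewrite sun_weight_pendant. Qed.

End SunWeights.

Theorem mainTheorem8 (n : nat) (hn : 3 <= n) : distance_antimagic (sun_adj n).
Proof.
exists (@sun_labelling n); split; first exact: sun_labelling_bij.
move=> [i|i] [j|j]; rewrite ?labelled_weight_cycle ?labelled_weight_pendant //.
- by move/cycle_weight_inj => eq_ij; congr inl; apply/val_inj/eq_ij.
- by have := cycle_weight_gt n i; have := ltn_ord j; lia.
- by have := cycle_weight_gt n j; have := ltn_ord i; lia.
- by case=> eq_ij; congr inr; apply: val_inj.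
Qed.
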